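(* Let $G$ be a group, $N\trianglelefteq G$ a normal subgroup and $\mathcal{H}$ a family of proper subgroups of $G$. If $\mathcal{H}$ is strongly divided by $N$, then there is a homotopy equivalence $$\operatorname{CC}(G,\mathcal{H})\simeq \operatorname{CC}(G/N,\overline{\mathcal{H}})\ast\operatorname{CC}(N,\mathcal{H}\cap N).$$
   Context: For a group $G$ and a family $\mathcal{K}$ of subgroups, the coset complex $\operatorname{CC}(G,\mathcal{K})$ is the simplicial complex whose vertices are the cosets $gK$ ($g\in G$, $K\in\mathcal{K}$; cosets of different members of $\mathcal{K}$ are different vertices) and where a finite set of vertices spans a simplex iff the cosets have nonempty common intersection; homotopy equivalences and joins ($\ast$) refer to geometric realisations. Write $\mathcal{H}=\mathcal{H}_N\sqcup\mathcal{H}^N$ with $\mathcal{H}_N=\{H\in\mathcal{H}: HN\neq G\}$ and $\mathcal{H}^N=\{K\in\mathcal{H}: KN=G\}$. For $H\le G$ let $\overline{H}$ be its image in $G/N$. Set $\overline{\mathcal{H}}=\{\overline{H}: H\in\mathcal{H}_N\}$ and $\mathcal{H}\cap N=\{K\cap N: K\in\mathcal{H}^N\}$. $\mathcal{H}$ is strongly divided by $N$ if (1) $N\subseteq H$ for all $H\in\mathcal{H}_N$, and (2) $(K_1\cap\dots\cap K_m)N=G$ for all finite collections $K_1,\dots,K_m\in\mathcal{H}^N$. *)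

From HB Require Import structures.
From mathcomp Require Import all_boot all_order all_algebra.
From mathcomp Require Import all_classical all_reals topology normedtype.
Set Implicit Arguments. Unset Strict Implicit. Unset Printing Implicit Defensive.
Import Order.TTheory GRing.Theory Num.Theory numFieldNormedType.Exports.
Local Open Scope classical_set_scope.
Local Open Scope ring_scope.

Record group := Group {
  gcar :> Type;
  gmul : gcar -> gcar -> gcar;
  gone : gcar;
  ginv : gcar -> gcar;
  gmulA : forall x y z, gmul x (gmul y z) = gmul (gmul x y) z;
  gmul1 : forall x, gmul gone x = x;
  gmulV : forall x, gmul (ginv x) x = gone }.

Definition is_subgroup (G : group) (H : set G) : Prop :=
  H (gone G) /\ (forall x y, H x -> H y -> H (gmul x y)) /\ (forall x, H x -> H (ginv x)).

Definition is_normal (G : group) (N : set G) : Prop :=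
  is_subgroup N /\ forall g n, N n -> N (gmul (gmul g n) (ginv g)).

Definition lcoset (T : Type) (mul : T -> T -> T) (g : T) (A : set T) : set T :=
  [set mul g a | a in A].
Definition setmul (T : Type) (mul : T -> T -> T) (A B : set T) : set T :=
  [set mul a b | a in A & b in B].

(** Coset complex CC(S, fam) of a group whose elements form the set [S] inside
    a type [T] with multiplication [mul] (S is the whole group; cosets gK, g in S). *)
Definition cc_vertex (T : Type) (S : set T) (mul : T -> T -> T)
  (fam : set (set T)) (v : set T * set T) : Prop :=
  fam v.1 /\ exists2 g, S g & v.2 = lcoset mul g v.1.

Definition cc_face (T : Type) (S : set T) (mul : T -> T -> T)
  (fam : set (set T)) (s : set (set T * set T)) : Prop :=
  finite_set s /\ s !=set0 /\ s `<=` cc_vertex S mul fam /\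
  exists x, forall v, s v -> v.2 x.

Definition sjoin (V1 V2 : Type) (F1 : set (set V1)) (F2 : set (set V2))
  : set (set (V1 + V2)) :=
  fun s => s !=set0 /\ (F1 (inl @^-1` s) \/ inl @^-1` s = set0) /\
                        (F2 (inr @^-1` s) \/ inr @^-1` s = set0).

Section Realization.
Variables (R : realType) (V : choiceType) (F : set (set V)).

Definition supp (a : V -> R) : set V := [set v | a v != 0].

Definition is_rpoint (a : V -> R) : Prop :=
  (forall v, 0 <= a v) /\ finite_set (supp a) /\ F (supp a) /\
  \sum_(v \in supp a) a v = 1.

Definition realization : Type := {a : V -> R | is_rpoint a}.

HB.instance Definition _ := gen_eqMixin realization.
HB.instance Definition _ := gen_choiceMixin realization.

(** weak (coherent) topology: U is open iff U meets every closed simplex |s|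
    in an open subset of |s| (|s| carrying its Euclidean = sup-metric topology). *)
Definition realization_open (U : set realization) : Prop :=
  forall s, F s -> forall a : realization, U a -> supp (sval a) `<=` s ->
  exists2 e : R, 0 < e & forall b : realization, supp (sval b) `<=` s ->
     (forall v, s v -> `|sval a v - sval b v| < e) -> U b.

End Realization.

Section RealTop.
Variables (R : realType) (V : choiceType) (F : set (set V)).
HB.instance Definition _ :=
  isSubBaseTopological.Build (realization R F) (@realization_open R V F) id.
End RealTop.

Definition homotopic (R : realType) (X Y : topologicalType) (f g : X -> Y) : Prop :=
  exists H : X * R -> Y,
    {within [set p | 0 <= p.2 <= 1], continuous H} /\
    (forall x, H (x, 0) = f x) /\ (forall x, H (x, 1) = g x).

Definition homotopy_equivalent (R : realType) (X Y : topologicalType) : Prop :=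
  exists (f : X -> Y) (g : Y -> X), continuous f /\ continuous g /\
    homotopic R (g \o f) id /\ homotopic R (f \o g) id.


Local Close Scope ring_scope.
Section CosetData.
Variables (G : group) (N : set G) (Hf : set (set G)).

Definition CC : set (set (set G * set G)) := cc_face [set: G] (@gmul G) Hf.

Definition fam_lowN : set (set G) := [set H | Hf H /\ setmul (@gmul G) H N <> [set: G]].
Definition fam_upN : set (set G) := [set K | Hf K /\ setmul (@gmul G) K N = [set: G]].

(** G/N, realised as the set of cosets gN with setwise product *)
Definition quot_carrier : set (set G) := [set lcoset (@gmul G) g N | g in [set: G]].
Definition quot_mul : set G -> set G -> set G := setmul (@gmul G).
Definition qimage (H : set G) : set (set G) := [set lcoset (@gmul G) h N | h in H].

Definition fam_bar : set (set (set G)) := [set qimage H | H in fam_lowN].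
Definition fam_capN : set (set G) := [set K `&` N | K in fam_upN].

Definition CC_quot : set (set (set (set G) * set (set G))) :=
  cc_face quot_carrier quot_mul fam_bar.
Definition CC_sub : set (set (set G * set G)) := cc_face N (@gmul G) fam_capN.

Definition strongly_divided : Prop :=
  (forall H, fam_lowN H -> N `<=` H) /\
  (forall Ks : set (set G), finite_set Ks -> Ks <> set0 -> Ks `<=` fam_upN ->
     setmul (@gmul G) (\bigcap_(K in Ks) K) N = [set: G]).

End CosetData.

From HB Require Import structures.
From mathcomp Require Import all_boot all_order all_algebra finmap.
From mathcomp Require Import all_classical all_reals topology normedtype.
Set Implicit Arguments. Unset Strict Implicit. Unset Printing Implicit Defensive.
Import Order.TTheory GRing.Theory Num.Theory numFieldNormedType.Exports.
Local Open Scope classical_set_scope.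

(** Under strong division the two complexes are isomorphic, hence their
    realizations are homeomorphic.  A coset [gH] with [H] in [H_N] is a union
    of cosets of [N] (as [N ⊆ H]), so it corresponds to the coset [ḡH̄] of
    [G/N].  A coset [gK] with [K] in [H^N] meets [N] (as [KN = G]) in a coset
    of [K ∩ N], and [K] is recovered from [K ∩ N] since [(K₁ ∩ K₂)N = G].  On
    simplices, condition (2) moves a common point [y] of cosets [yK₁, ..., yKₘ]
    to [yk] with [k ∈ K₁ ∩ ... ∩ Kₘ] and [yk] in any prescribed coset [cN];
    this turns a simplex of [CC(G, H)] into a simplex of the join and back. *)

Section RealizationTopology.
Variables (R : realType) (V : choiceType) (F : set (set V)).
Local Notation ropen := (@realization_open R V F).

Lemma realization_openT : ropen setT.
Proof. by move=> s _ a _ _; exists 1%R. Qed.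

Lemma realization_openI U1 U2 : ropen U1 -> ropen U2 -> ropen (U1 `&` U2).
Proof.
move=> open1 open2 s Fs a [a1 a2] sa.
have [e1 e1p near1] := open1 s Fs a a1 sa.
have [e2 e2p near2] := open2 s Fs a a2 sa.
exists (Num.min e1 e2); first by rewrite lt_min e1p e2p.
move=> b sb ab; split; [apply: near1 | apply: near2] => // v sv;
  by apply: (lt_le_trans (ab v sv)); rewrite ge_min lexx ?orbT.
Qed.

Lemma realization_open_bigcap (E : {fset set (realization R F)}) :
  (forall U, U \in E -> ropen U) -> ropen (\bigcap_(U in [set` E]) U).
Proof.
elim/fset1U_rect: E => [|U E _ IH] openE.
  by rewrite set_fset0 bigcap_set0; exact: realization_openT.
rewrite bigcap_fsetU1; apply: realization_openI; first by apply: openE; rewrite fsetU11.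
by apply: IH => U' U'E; apply: openE; rewrite in_fsetU U'E orbT.
Qed.

Lemma realization_open_open (U : set (realization R F)) : ropen U -> open U.
Proof.
move=> openU; exists [set U]; last by rewrite bigcup_set1.
by move=> _ ->; exact: finI_from1.
Qed.

Lemma open_realization_open (U : set (realization R F)) : open U -> ropen U.
Proof.
move=> [D subD <-] s Fs a [U' DU' U'a] sa.
have [E subE eU'] := subD U' DU'; subst U'.
have openU' : ropen (\bigcap_(j in [set` E]) j).
  by apply: realization_open_bigcap => j jE; have := subE j jE; rewrite inE.
have [e ep near] := openU' s Fs a U'a sa.
by exists e => // b sb ab; exists (\bigcap_(j in [set` E]) j) => //; exact: near.
Qed.

Lemma realization_eq (a b : realization R F) : sval a = sval b -> a = b.
Proof.
by case: a b => a pa [b pb] /= eab; subst b; congr exist; exact: Prop_irrelevance.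
Qed.

End RealizationTopology.

Definition is_vertex {T : Type} (F : set (set T)) (x : T) : Prop := exists2 s, F s & s x.

Section SimplicialMap.
Variables (R : realType) (V W : choiceType) (FV : set (set V)) (FW : set (set W)).
Variables (phi : V -> W) (psi : W -> V).
Hypotheses (phi_face : forall s, FV s -> FW (phi @` s))
  (phiK : forall v, is_vertex FV v -> psi (phi v) = v)
  (psiK : forall w, is_vertex FW w -> phi (psi w) = w).

Definition push_coords (a : V -> R) (w : W) : R :=
  if `[< is_vertex FW w >] then a (psi w) else 0%R.

Lemma is_vertex_phi v : is_vertex FV v -> is_vertex FW (phi v).
Proof. by move=> [s Fs sv]; exists (phi @` s); [exact: phi_face | exists v]. Qed.

Lemma push_coords_phi (a : V -> R) v : is_vertex FV v -> push_coords a (phi v) = a v.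
Proof. by move=> Vv; rewrite /push_coords asboolT ?phiK //; exact: is_vertex_phi. Qed.

Lemma supp_is_vertex {a : V -> R} {v : V} : is_rpoint FV a -> supp a v -> is_vertex FV v.
Proof. by move=> [_ [_ [Fa _]]] av; exists (supp a). Qed.

Lemma supp_push_coords {a : V -> R} : is_rpoint FV a -> supp (push_coords a) = phi @` supp a.
Proof.
move=> pa; rewrite eqEsubset; split.
  move=> w; rewrite /supp /push_coords /=.
  by case: asboolP => [Ww aw|_]; [exists (psi w); rewrite ?psiK | rewrite eqxx].
move=> _ [v av <-]; rewrite /supp /= push_coords_phi //; exact: supp_is_vertex pa av.
Qed.

Lemma push_coords_rpoint {a : V -> R} : is_rpoint FV a -> is_rpoint FW (push_coords a).
Proof.
move=> pa; have [a_ge0 [fina [Fa suma]]] := pa.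
split; first by move=> w; rewrite /push_coords; case: asboolP.
rewrite (supp_push_coords pa); split; first exact: finite_image.
split; first exact: phi_face.
rewrite fsbig_image; last first.
  move=> x y; rewrite !inE => ax ay exy.
  by rewrite -(phiK (supp_is_vertex pa ax)) exy phiK //; exact: supp_is_vertex pa ay.
rewrite -suma; apply: eq_fsbigr => v; rewrite inE => av.
exact/push_coords_phi/(supp_is_vertex pa av).
Qed.

Definition realization_map (a : realization R FV) : realization R FW :=
  exist _ (push_coords (sval a)) (push_coords_rpoint (svalP a)).

Lemma realization_map_continuous : continuous realization_map.
Proof.
apply/continuousP => A /open_realization_open openA; apply: realization_open_open.
move=> s Fs a Aa sa.
have supp_map b : supp (sval b) `<=` s -> supp (sval (realization_map b)) `<=` phi @` s.
  by move=> sb; rewrite /= (supp_push_coords (svalP b)); exact: image_subset.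
have [e ep near] := openA _ (phi_face Fs) _ Aa (supp_map _ sa).
exists e => // b sb ab; apply: near; first exact: supp_map.
move=> _ [v sv <-] /=; have Vv : is_vertex FV v by exists s.
by rewrite !push_coords_phi //; exact: ab.
Qed.

End SimplicialMap.

Lemma realization_mapK (R : realType) (V W : choiceType) (FV : set (set V))
    (FW : set (set W)) (phi : V -> W) (psi : W -> V)
    (phi_face : forall s, FV s -> FW (phi @` s)) (psi_face : forall t, FW t -> FV (psi @` t))
    (phiK : forall v, is_vertex FV v -> psi (phi v) = v)
    (psiK : forall w, is_vertex FW w -> phi (psi w) = w) :
  cancel (@realization_map R _ _ _ _ _ _ phi_face phiK psiK) (realization_map psi_face psiK phiK).
Proof.
move=> a; apply: realization_eq; apply: funext => v /=; rewrite /push_coords.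
case: asboolP => [Vv | nVv]; first by rewrite asboolT ?phiK //; exact: (is_vertex_phi phi_face).
by apply/esym/eqP/negbNE/negP => av; exact/nVv/(supp_is_vertex (svalP a) av).
Qed.

Lemma homotopic_id (R : realType) (X : topologicalType) : homotopic R (@id X) id.
Proof.
exists fst; split => //.
by apply: continuous_subspaceT => x; exact: cvg_fst.
Qed.

Lemma homeomorphism_homotopy_equivalent (R : realType) (X Y : topologicalType)
    (f : X -> Y) (g : Y -> X) :
  continuous f -> continuous g -> cancel f g -> cancel g f ->
  homotopy_equivalent R X Y.
Proof.
move=> cf cg fK gK; exists f, g; do 2!split => //.
have -> : g \o f = id by exact: funext fK.
have -> : f \o g = id by exact: funext gK.
by split; exact: homotopic_id.
Qed.

Lemma simplicial_iso_homotopy_equivalent (R : realType) (V W : choiceType)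
    (FV : set (set V)) (FW : set (set W)) (phi : V -> W) (psi : W -> V) :
  (forall s, FV s -> FW (phi @` s)) -> (forall t, FW t -> FV (psi @` t)) ->
  (forall v, is_vertex FV v -> psi (phi v) = v) ->
  (forall w, is_vertex FW w -> phi (psi w) = w) ->
  homotopy_equivalent R (realization R FV) (realization R FW).
Proof.
move=> phi_face psi_face phiK psiK.
apply: (@homeomorphism_homotopy_equivalent R _ _ (realization_map phi_face phiK psiK)
  (realization_map psi_face psiK phiK)).
- exact: realization_map_continuous.
- exact: realization_map_continuous.
- exact: realization_mapK.
- exact: realization_mapK.
Qed.

Lemma sjoin_inl_face (V1 V2 : Type) (F1 : set (set V1)) (F2 : set (set V2)) t p :
  sjoin F1 F2 t -> t (inl p) -> F1 (inl @^-1` t).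
Proof. by move=> [_ [[//|t0] _]] tp; have : (inl @^-1` t) p by []; rewrite t0. Qed.

Lemma sjoin_inr_face (V1 V2 : Type) (F1 : set (set V1)) (F2 : set (set V2)) t p :
  sjoin F1 F2 t -> t (inr p) -> F2 (inr @^-1` t).
Proof. by move=> [_ [_ [//|t0]]] tp; have : (inr @^-1` t) p by []; rewrite t0. Qed.

Lemma sjoin_finite (V1 V2 : Type) (F1 : set (set V1)) (F2 : set (set V2)) t :
  (forall s, F1 s -> finite_set s) -> (forall s, F2 s -> finite_set s) ->
  sjoin F1 F2 t -> finite_set t.
Proof.
move=> fin1 fin2 [_ [t1 t2]].
have finl : finite_set (inl @^-1` t) by case: t1 => [/fin1 | ->].
have finr : finite_set (inr @^-1` t) by case: t2 => [/fin2 | ->].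
apply: (sub_finite_set (B := inl @` (inl @^-1` t) `|` inr @` (inr @^-1` t))).
  by case=> p tp; [left | right]; exists p.
by rewrite finite_setU; split; exact: finite_image.
Qed.

Section GroupFacts.
Variable G : group.
Implicit Types x y : G.
Local Notation "x * y" := (@gmul G x y).
Local Notation "x ^-1" := (@ginv G x).
Local Notation e := (gone G).
Local Notation lc := (lcoset (@gmul G)).

Lemma gmulKg x y : x^-1 * (x * y) = y.
Proof. by rewrite gmulA gmulV gmul1. Qed.

Lemma gmulgV x : x * x^-1 = e.
Proof. by rewrite -[LHS]gmul1 -{1}(gmulV (x^-1)) -gmulA (gmulKg x) gmulV. Qed.

Lemma gmulg1 x : x * e = x.
Proof. by rewrite -(gmulV x) gmulA gmulgV gmul1. Qed.

Lemma gmulKVg x y : x * (x^-1 * y) = y.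
Proof. by rewrite gmulA gmulgV gmul1. Qed.

Lemma gmulgK x y : (x * y) * y^-1 = x.
Proof. by rewrite -gmulA gmulgV gmulg1. Qed.

Lemma ginvgK x : (x^-1)^-1 = x.
Proof. by rewrite -(gmulg1 ((x^-1)^-1)) -(gmulV x) gmulA gmulV gmul1. Qed.

Lemma ginvMg x y : (x * y)^-1 = y^-1 * x^-1.
Proof.
have inv_xy : (x * y)^-1 * (x * y) = (y^-1 * x^-1) * (x * y).
  by rewrite gmulV -gmulA (gmulA (x^-1)) gmulV gmul1 gmulV.
by rewrite -(gmulgK (x * y)^-1 (x * y)) inv_xy gmulgK.
Qed.

Lemma lcoset1 (A : set G) : lc e A = A.
Proof. by rewrite /lcoset (_ : gmul e = id) ?image_id //; apply: funext => x; rewrite gmul1. Qed.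

Variable H : set G.
Hypothesis subH : is_subgroup H.

Lemma subgroup1 : H e. Proof. by case: subH. Qed.
Lemma subgroupM {x y} : H x -> H y -> H (x * y). Proof. by case: subH => _ []; auto. Qed.
Lemma subgroupV {x} : H x -> H x^-1. Proof. by case: subH => _ []; auto. Qed.

Lemma lcosetE g z : lc g H z <-> H (g^-1 * z).
Proof.
split; first by move=> [h Hh <-]; rewrite gmulKg.
by move=> Hz; exists (g^-1 * z); rewrite ?gmulKVg.
Qed.

Lemma lcoset_mulr g h : H h -> lc g H (g * h).
Proof. by exists h. Qed.

Lemma lcoset_self g : lc g H g.
Proof. by rewrite -{2}(gmulg1 g); apply: lcoset_mulr; exact: subgroup1. Qed.

Lemma lcoset_eq g z : lc g H z -> lc g H = lc z H.
Proof.
move=> /lcosetE Hz; rewrite eqEsubset; split => y /lcosetE Hy; apply/lcosetE.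
  by have := subgroupM (subgroupV Hz) Hy; rewrite ginvMg ginvgK -gmulA gmulKVg.
by rewrite -(gmulKVg z y) gmulA; exact: subgroupM.
Qed.

Lemma setmul_lcoset g (L : set G) : L `<=` H -> L e -> setmul (@gmul G) (lc g L) H = lc g H.
Proof.
move=> LH Le; rewrite eqEsubset; split.
  move=> _ [_ [l Ll <-] [h Hh <-]]; rewrite -gmulA.
  by apply: lcoset_mulr; apply: subgroupM => //; exact: LH.
by move=> _ [h Hh <-]; exists g; [exists e; rewrite ?gmulg1 | exists h].
Qed.

End GroupFacts.

Section StronglyDivided.
Variables (G : group) (N : set G) (Hf : set (set G)).
Hypotheses (normalN : is_normal N) (Hf_subgroup : forall H, Hf H -> is_subgroup H)
  (divN : strongly_divided N Hf).
Local Notation "x * y" := (@gmul G x y).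
Local Notation "x ^-1" := (@ginv G x).
Local Notation e := (gone G).
Local Notation lc := (lcoset (@gmul G)).
Local Notation sm := (setmul (@gmul G)).
Local Notation cc_G := (cc_vertex [set: G] (@gmul G) Hf).
Local Notation cc_quot := (cc_vertex (quot_carrier N) (@quot_mul G) (fam_bar N Hf)).
Local Notation cc_sub := (cc_vertex N (@gmul G) (fam_capN N Hf)).
Local Notation join := (sjoin (CC_quot N Hf) (CC_sub N Hf)).

Let subN : is_subgroup N := normalN.1.

Lemma normalJV g n : N n -> N (g^-1 * n * g).
Proof. by move/(normalN.2 (g^-1)); rewrite ginvgK. Qed.

Lemma quot_mul_lcoset a b : quot_mul (lc a N) (lc b N) = lc (a * b) N.
Proof.
rewrite eqEsubset; split.
  move=> _ [_ [n Nn <-] [_ [n' Nn' <-] <-]].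
  exists (b^-1 * n * b * n'); first by apply: (subgroupM subN) => //; exact: normalJV.
  by rewrite !gmulA gmulgK.
move=> _ [n Nn <-]; exists a; first exact: (lcoset_self subN).
by exists (b * n); [exists n | rewrite gmulA].
Qed.

Lemma qimage_lcoset g H : qimage N (lc g H) = lcoset (@quot_mul G) (lc g N) (qimage N H).
Proof.
rewrite eqEsubset; split => _ [_ [h Hh <-] <-].
  by exists (lc h N); [exists h | rewrite quot_mul_lcoset].
by rewrite quot_mul_lcoset; exists (g * h) => //; exists h.
Qed.

Lemma bigcup_qimage (C : set G) : (forall c n, C c -> N n -> C (c * n)) ->
  \bigcup_(Y in qimage N C) Y = C.
Proof.
move=> CN; rewrite eqEsubset; split; first by move=> x [_ [c Cc <-] [n Nn <-]]; exact: CN.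
by move=> x Cx; exists (lc x N); [exists x | exact: (lcoset_self subN)].
Qed.

Lemma lcoset_setIN n K : is_subgroup K -> N n -> lc n K `&` N = lc n (K `&` N).
Proof.
move=> subK Nn; rewrite eqEsubset; split.
  move=> _ [[k Kk <-] Nnk]; exists k => //; split => //.
  by rewrite -(gmulKg n k); apply: (subgroupM subN) => //; exact: (subgroupV subN).
by move=> _ [k [Kk Nk] <-]; split; [exists k | exact: (subgroupM subN)].
Qed.

Lemma fam_lowN_subgroup H : fam_lowN N Hf H -> is_subgroup H.
Proof. by move=> [/Hf_subgroup]. Qed.

Lemma fam_upN_subgroup K : fam_upN N Hf K -> is_subgroup K.
Proof. by move=> [/Hf_subgroup]. Qed.

Lemma fam_upN_nlowN K : fam_upN N Hf K -> ~ fam_lowN N Hf K.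
Proof. by move=> [_ KN] [_ /(_ KN)]. Qed.

Lemma fam_lowNVupN H : Hf H -> fam_lowN N Hf H \/ fam_upN N Hf H.
Proof.
by move=> HfH; have [HN|nHN] := pselect (sm H N = [set: G]); [right | left].
Qed.

Lemma fam_lowN_lcoset_mulN H g z n : fam_lowN N Hf H -> lc g H z -> N n -> lc g H (z * n).
Proof.
move=> lowH [h Hh <-] Nn; rewrite -gmulA; apply: lcoset_mulr.
exact: (subgroupM (fam_lowN_subgroup lowH) Hh (divN.1 _ lowH _ Nn)).
Qed.

Lemma setIN_eq_sub K1 K2 : is_subgroup K1 -> is_subgroup K2 ->
  sm (K1 `&` K2) N = [set: G] -> K1 `&` N = K2 `&` N -> K1 `<=` K2.
Proof.
move=> subK1 subK2 K12N eqN k K1k.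
have : [set: G] k by [].
rewrite -K12N => -[k' [K1k' K2k'] [n Nn ekn]]; subst k.
have K1n : K1 n by rewrite -(gmulKg k' n); apply: (subgroupM subK1) => //; exact: (subgroupV subK1).
have [K2n _] : (K2 `&` N) n by rewrite -eqN.
exact: (subgroupM subK2).
Qed.

Lemma fam_upN_setIN_inj K1 K2 : fam_upN N Hf K1 -> fam_upN N Hf K2 ->
  K1 `&` N = K2 `&` N -> K1 = K2.
Proof.
move=> up1 up2 eqN; have subK1 := fam_upN_subgroup up1; have subK2 := fam_upN_subgroup up2.
have K12N : sm (K1 `&` K2) N = [set: G].
  have := divN.2 [set K1; K2]; rewrite bigcap_setU1 bigcap_set1; apply.
  - by rewrite finite_setU; split; exact: finite_set1.
  - by move=> /seteqP [/(_ K1) K10 _]; apply: K10; left.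
  - by move=> K [->|->].
rewrite eqEsubset; split; first exact: setIN_eq_sub.
by apply: setIN_eq_sub; rewrite // setIC.
Qed.

Lemma fam_upN_common_point (Ks : set (set G)) y c :
  finite_set Ks -> Ks `<=` fam_upN N Hf ->
  exists2 k, (\bigcap_(K in Ks) K) k & lc c N (y * k).
Proof.
move=> finKs upKs; have [-> | Ks0] := pselect (Ks = set0).
  by exists (y^-1 * c); rewrite ?bigcap_set0 ?gmulKVg //; exact: (lcoset_self subN).
have : [set: G] (y^-1 * c) by [].
rewrite -(divN.2 _ finKs Ks0 upKs) => -[k Ksk [n Nn kn]].
exists k => //; have -> : y * k = c * n^-1 by rewrite -(gmulgK k n) kn gmulA gmulKVg.
exact/lcoset_mulr/(subgroupV subN).
Qed.

Lemma fam_upN_lcoset K g : fam_upN N Hf K -> exists2 n, N n & lc g K = lc n K.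
Proof.
move=> upK; have [k] : exists2 k, (\bigcap_(K' in [set K]) K') k & lc e N (g * k).
  by apply: fam_upN_common_point; [exact: finite_set1 | move=> _ ->].
rewrite bigcap_set1 lcoset1 => Kk Ngk; exists (g * k) => //.
exact/(lcoset_eq (fam_upN_subgroup upK))/lcoset_mulr.
Qed.

Definition low_vertex (v : set G * set G) : Prop :=
  fam_lowN N Hf v.1 /\ exists g, v.2 = lc g v.1.
Definition up_vertex (v : set G * set G) : Prop :=
  fam_upN N Hf v.1 /\ exists2 n, N n & v.2 = lc n v.1.

Lemma low_vertex_cc v : low_vertex v -> cc_G v.
Proof. by move=> [[HfH _] [g eg]]; split; last exists g. Qed.

Lemma up_vertex_cc v : up_vertex v -> cc_G v.
Proof. by move=> [[HfK _] [n _ en]]; split; last exists n. Qed.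

Lemma cc_vertex_lowVup v : cc_G v -> low_vertex v \/ up_vertex v.
Proof.
case: v => H C [/= HfH [g _ ->]]; case: (fam_lowNVupN HfH) => [lowH | upH].
  by left; split; last exists g.
by right; split => //; apply: fam_upN_lcoset.
Qed.

Lemma low_vertex_mulN v z n : low_vertex v -> v.2 z -> N n -> v.2 (z * n).
Proof. by case: v => H C [/= lowH [g ->]]; exact: fam_lowN_lcoset_mulN. Qed.

Lemma low_vertex_lcoset v c z : low_vertex v -> v.2 c -> lc c N z -> v.2 z.
Proof. by move=> lowv vc [n Nn <-]; exact: low_vertex_mulN. Qed.

Lemma low_vertex_qimage v c : low_vertex v -> qimage N v.2 (lc c N) -> v.2 c.
Proof.
move=> lowv [h vh ehc]; apply: (low_vertex_lcoset lowv vh).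
by rewrite ehc; exact: (lcoset_self subN).
Qed.

Lemma up_vertices_common_point (U : set (set G * set G)) y c :
  U `<=` up_vertex -> finite_set U -> (forall v, U v -> v.2 y) ->
  exists2 z, lc c N z & forall v, U v -> v.2 z.
Proof.
move=> Uup finU Uy.
have [k Uk ck] : exists2 k, (\bigcap_(K in fst @` U) K) k & lc c N (y * k).
  apply: fam_upN_common_point; first exact: finite_image.
  by move=> _ [v Uv <-]; exact: (Uup v Uv).1.
exists (y * k) => // -[K C] Uv; have [/= /fam_upN_subgroup subK [n _ eC]] := Uup _ Uv.
have := Uy _ Uv; rewrite /= eC => /(lcoset_eq subK) ->.
by apply: lcoset_mulr; apply: Uk; exists (K, C).
Qed.

Definition qvertex (v : set G * set G) : set (set G) * set (set G) :=
  (qimage N v.1, qimage N v.2).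
Definition nvertex (v : set G * set G) : set G * set G := (v.1 `&` N, v.2 `&` N).

Definition split_vertex (v : set G * set G) : (set (set G) * set (set G)) + (set G * set G) :=
  if `[< fam_lowN N Hf v.1 >] then inl (qvertex v) else inr (nvertex v).

(* The [K] in [H^N] with [K ∩ N = L], unique by [fam_upN_setIN_inj]. *)
Definition upN_lift (L : set G) : set G := xget L [set K | fam_upN N Hf K /\ K `&` N = L].

Definition merge_vertex (w : (set (set G) * set (set G)) + (set G * set G)) : set G * set G :=
  match w with
  | inl p => (\bigcup_(Y in p.1) Y, \bigcup_(Y in p.2) Y)
  | inr p => (upN_lift p.1, sm p.2 (upN_lift p.1))
  end.

Lemma upN_lift_setIN K : fam_upN N Hf K -> upN_lift (K `&` N) = K.
Proof.
move=> upK; rewrite /upN_lift.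
case: xgetP => [K' _ [upK' eqN] | /(_ K) []//]; exact: fam_upN_setIN_inj.
Qed.

Lemma split_vertex_low v : low_vertex v -> split_vertex v = inl (qvertex v).
Proof. by move=> [lowv _]; rewrite /split_vertex asboolT. Qed.

Lemma split_vertex_up v : up_vertex v -> split_vertex v = inr (nvertex v).
Proof. by move=> [/fam_upN_nlowN upv _]; rewrite /split_vertex asboolF. Qed.

Lemma qvertexK v : low_vertex v -> merge_vertex (inl (qvertex v)) = v.
Proof.
case: v => H C [/= lowH [g ->]]; have subH := fam_lowN_subgroup lowH.
congr pair; apply: bigcup_qimage => c n; last exact: fam_lowN_lcoset_mulN.
by move=> Hc Nn; apply: (subgroupM subH Hc); exact: divN.1.
Qed.

Lemma nvertexK v : up_vertex v -> merge_vertex (inr (nvertex v)) = v.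
Proof.
case: v => K C [/= upK [n Nn ->]]; have subK := fam_upN_subgroup upK.
rewrite /= upN_lift_setIN // lcoset_setIN // setmul_lcoset //.
by split; [exact: (subgroup1 subK) | exact: (subgroup1 subN)].
Qed.

Lemma qvertex_cc v : low_vertex v -> cc_quot (qvertex v).
Proof.
case: v => H C [/= lowH [g ->]]; split; first by exists H.
by exists (lc g N); [exists g | rewrite /= qimage_lcoset].
Qed.

Lemma nvertex_cc v : up_vertex v -> cc_sub (nvertex v).
Proof.
case: v => K C [/= upK [n Nn ->]]; split; first by exists K.
by exists n => //=; rewrite lcoset_setIN //; exact: fam_upN_subgroup.
Qed.

Lemma cc_quot_qvertex w : cc_quot w -> exists2 v, low_vertex v & w = qvertex v.
Proof.
case: w => X D [/= [H lowH <-] [_ [g _ <-] ->]].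
by exists (H, lc g H); [split; last exists g | rewrite /qvertex qimage_lcoset].
Qed.

Lemma cc_sub_nvertex w : cc_sub w -> exists2 v, up_vertex v & w = nvertex v.
Proof.
case: w => L E [/= [K upK <-] [n Nn ->]].
exists (K, lc n K); first by split; last exists n.
by rewrite /nvertex /= lcoset_setIN //; exact: fam_upN_subgroup.
Qed.

Lemma join_vertexP t w : join t -> t w ->
  (exists2 v, low_vertex v & w = inl (qvertex v)) \/
  (exists2 v, up_vertex v & w = inr (nvertex v)).
Proof.
move=> jt; case: w => p tp; [left | right].
  have [_ [_ [tv _]]] := sjoin_inl_face jt tp.
  by have [v lowv ->] := cc_quot_qvertex (tv p tp); exists v.
have [_ [_ [tv _]]] := sjoin_inr_face jt tp.
by have [v upv ->] := cc_sub_nvertex (tv p tp); exists v.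
Qed.

Lemma split_vertexK v : is_vertex (CC Hf) v -> merge_vertex (split_vertex v) = v.
Proof.
move=> [s [_ [_ [sv _]]] /sv/cc_vertex_lowVup [lowv | upv]].
  by rewrite split_vertex_low // qvertexK.
by rewrite split_vertex_up // nvertexK.
Qed.

Lemma merge_vertexK w : is_vertex join w -> split_vertex (merge_vertex w) = w.
Proof.
move=> [t jt /(join_vertexP jt) [[v lowv ->] | [v upv ->]]].
  by rewrite qvertexK // split_vertex_low.
by rewrite nvertexK // split_vertex_up.
Qed.

Lemma preimage_inl_split s : s `<=` cc_G ->
  inl @^-1` (split_vertex @` s) = qvertex @` (s `&` low_vertex).
Proof.
move=> sv; rewrite eqEsubset; split => [p [v sv' ev] | _ [v [sv' lowv] <-]] /=.
  case: (cc_vertex_lowVup (sv _ sv')) => [lowv | upv].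
    by exists v => //; move: ev; rewrite split_vertex_low // => -[].
  by move: ev; rewrite split_vertex_up.
by exists v => //; rewrite split_vertex_low.
Qed.

Lemma preimage_inr_split s : s `<=` cc_G ->
  inr @^-1` (split_vertex @` s) = nvertex @` (s `&` up_vertex).
Proof.
move=> sv; rewrite eqEsubset; split => [p [v sv' ev] | _ [v [sv' upv] <-]] /=.
  case: (cc_vertex_lowVup (sv _ sv')) => [lowv | upv].
    by move: ev; rewrite split_vertex_low.
  by exists v => //; move: ev; rewrite split_vertex_up // => -[].
by exists v => //; rewrite split_vertex_up.
Qed.

Lemma qvertex_face L : L `<=` low_vertex -> finite_set L -> L !=set0 ->
  (exists x, forall v, L v -> v.2 x) -> CC_quot N Hf (qvertex @` L).
Proof.
move=> Llow finL [v0 Lv0] [x Lx]; split; first exact: finite_image.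
split; first by exists (qvertex v0), v0.
split; first by move=> _ [v Lv <-]; exact/qvertex_cc/Llow.
by exists (lc x N) => _ [v Lv <-]; exists x => //; exact: Lx.
Qed.

Lemma nvertex_face U : U `<=` up_vertex -> finite_set U -> U !=set0 ->
  (exists2 z, N z & forall v, U v -> v.2 z) -> CC_sub N Hf (nvertex @` U).
Proof.
move=> Uup finU [v0 Uv0] [z Nz Uz]; split; first exact: finite_image.
split; first by exists (nvertex v0), v0.
split; first by move=> _ [v Uv <-]; exact/nvertex_cc/Uup.
by exists z => _ [v Uv <-]; split => //; exact: Uz.
Qed.

Lemma split_face s : CC Hf s -> join (split_vertex @` s).
Proof.
move=> [fins [[v0 sv0] [sv [x sx]]]].
split; first by exists (split_vertex v0), v0.
split; rewrite ?preimage_inl_split ?preimage_inr_split //.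
  have [-> | /eqP/set0P L0] := pselect (s `&` low_vertex = set0); first by right; rewrite image_set0.
  left; apply: qvertex_face => //; first exact: finite_setIl.
  by exists x => v [sv' _]; exact: sx.
have [-> | /eqP/set0P U0] := pselect (s `&` up_vertex = set0); first by right; rewrite image_set0.
have finU : finite_set (s `&` up_vertex) by exact: finite_setIl.
have [z Nz Uz] : exists2 z, lc e N z & forall v, (s `&` up_vertex) v -> v.2 z.
  by apply: (up_vertices_common_point (y := x) e _ finU) => [v [] | v [/sx]].
left; apply: nvertex_face => //.
by exists z => //; move: Nz; rewrite lcoset1.
Qed.

Lemma join_low_common_point t : join t ->
  exists c, forall v, low_vertex v -> t (inl (qvertex v)) -> v.2 c.
Proof.
move=> jt; have [[v0 lowv0 tv0] | none] := pselect (exists2 v, low_vertex v & t (inl (qvertex v))).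
  have [_ [_ [_ [Q tQ]]]] := sjoin_inl_face jt tv0.
  have [c _ eQ] := tQ _ tv0; subst Q; exists c => v lowv tv.
  exact: (low_vertex_qimage lowv (tQ _ tv)).
by exists e => v lowv tv; case: none; exists v.
Qed.

Lemma join_up_common_point t : join t ->
  exists y, forall v, up_vertex v -> t (inr (nvertex v)) -> v.2 y.
Proof.
move=> jt; have [[v0 upv0 tv0] | none] := pselect (exists2 v, up_vertex v & t (inr (nvertex v))).
  have [_ [_ [_ [y ty]]]] := sjoin_inr_face jt tv0.
  by exists y => v upv /ty [].
by exists e => v upv tv; case: none; exists v.
Qed.

Lemma merge_face t : join t -> CC Hf (merge_vertex @` t).
Proof.
move=> jt; have fint : finite_set t by apply: (sjoin_finite _ _ jt) => s [].
have vertices w : t w -> cc_G (merge_vertex w).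
  move=> /(join_vertexP jt) [[v lowv ->] | [v upv ->]].
    by rewrite qvertexK //; exact: low_vertex_cc.
  by rewrite nvertexK //; exact: up_vertex_cc.
have [c low_c] := join_low_common_point jt.
have [y up_y] := join_up_common_point jt.
set U := [set v | up_vertex v /\ t (inr (nvertex v))].
have finU : finite_set U.
  apply: sub_finite_set (finite_image merge_vertex fint) => v [upv tv].
  by exists (inr (nvertex v)); rewrite ?nvertexK.
have [z cz Uz] : exists2 z, lc c N z & forall v, U v -> v.2 z.
  by apply: (up_vertices_common_point (y := y) c _ finU) => [v [] | v [/up_y]].
split; first exact: finite_image.
split; first by case: jt => -[w0 tw0] _; exists (merge_vertex w0), w0.
split; first by move=> _ [w tw <-]; exact: vertices.
exists z => _ [w tw <-]; case: (join_vertexP jt tw) => -[v vv ew]; move: tw; rewrite ew.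
  by rewrite qvertexK // => tv; exact: (low_vertex_lcoset vv (low_c v vv tv)).
by rewrite nvertexK // => tv; exact: Uz.
Qed.

End StronglyDivided.

Theorem theorem3p19 (R : realType) (G : group) (N : set G) (Hf : set (set G)) :
  is_normal N ->
  (forall H, Hf H -> is_subgroup H /\ H <> [set: G]) ->
  strongly_divided N Hf ->
  homotopy_equivalent R (realization R (CC Hf))
    (realization R (sjoin (CC_quot N Hf) (CC_sub N Hf))).
Proof.
move=> normalN Hf_proper divN.
have Hf_subgroup H : Hf H -> is_subgroup H by move/Hf_proper => [].
apply: (@simplicial_iso_homotopy_equivalent R _ _ _ _ (split_vertex N Hf) (merge_vertex N Hf)).
- exact: split_face.
- exact: merge_face.
- exact: split_vertexK.
- exact: merge_vertexK.
Qed.
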